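(* Let $n\in\mathbb N$ be even and let $1_n=(1,2,\ldots,n)$. Let $$a_1(n)=\{\pi\in\mathcal P_2(n)\,:\,\#(\pi^{-1}1_n)=n/2-1\}.$$ For $1\le u<v<n$ let $\mathrm{NC}^{\rm T}_{2,u,v}(n)$ be the set of pairings $\pi\in\mathcal P_2(n)$ such that, with $\gamma=1_n\,(u-1,v)$ (where the transposition $(0,v)$ is interpreted as $(n,v)$): (i) the group $\langle\pi,\gamma\rangle$ acts transitively on $[n]$; (ii) $\#(\pi)+\#(\pi^{-1}\gamma)+\#(\gamma)=n+2$; (iii) $(u,v)$ is a cycle of $\pi$; (iv) for all $a\in\{1,\ldots,u-1\}$ (an empty condition when $u=1$), $\pi(a)\in[n]\setminus\{u,u+1,\ldots,v\}$. Let $\mathrm{NC}_2^{\rm T}(n)=\bigcup_{1\le u<v<n}\mathrm{NC}^{\rm T}_{2,u,v}(n)$. Then $a_1(n)=\mathrm{NC}_2^{\rm T}(n)$ as subsets of $\mathcal P_2(n)$.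
   Context: $[n]=\{1,\ldots,n\}$. $\mathcal P_2(n)$ is the set of pairings of $[n]$, each identified with the fixed-point-free involution of $[n]$ whose cycles are its blocks. Permutations are composed right to left, $(\sigma\rho)(x)=\sigma(\rho(x))$, and $\#(\sigma)$ denotes the number of cycles of $\sigma$, fixed points included. Note $1_n(u-1,v)=(u,\ldots,v)(1,\ldots,u-1,v+1,\ldots,n)$ has two cycles. The set $a_1(n)$ encodes the genus-one orientable ribbon graphs built from one $n$-gon. *)

From mathcomp Require Import all_boot all_order all_fingroup.
Set Implicit Arguments. Unset Strict Implicit. Unset Printing Implicit Defensive.

(* Convention: the point k of [n] = {1..n} is the ordinal of value k-1 in 'I_n. *)

(* paper composition (s o t)(x) = s (t x); mathcomp's s * t is "t after s" *)
Definition pcomp n (s t : {perm 'I_n}) : {perm 'I_n} := (t * s)%g.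

Definition ncycles n (s : {perm 'I_n}) : nat := #|porbits s|.

(* the long cycle 1_n = (1,2,...,n) : k |-> k+1 mod n *)
Definition one_n n : {perm 'I_n} := perm (@ordS_inj n).

Definition is_pairing n (p : {perm 'I_n}) : Prop :=
  (forall x, p (p x) = x) /\ (forall x, p x != x).

Definition a1 n (p : {perm 'I_n}) : Prop :=
  is_pairing p /\ ncycles (pcomp p^-1%g (one_n n)) + 1 = n./2.

(* NC^T_{2,u,v}(n); the point u-1 (read as n when u = 1) has index
   (if u == 1 then n-1 else u-2), the point v has index v-1. *)
Definition NCT_uv n (u v : nat) (p : {perm 'I_n}) : Prop :=
  is_pairing p /\
  exists (a b : 'I_n),
    val a = (if u == 1 then n.-1 else u - 2) /\ val b = v.-1 /\
    let g := pcomp (one_n n) (tperm a b) in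
    [transitive <<[set p; g]>>, on [set: 'I_n] | 'P] /\
    ncycles p + ncycles (pcomp p^-1%g g) + ncycles g = n + 2 /\
    (forall x : 'I_n, val x = u.-1 -> val (p x) = v.-1) /\
    (forall x : 'I_n, x.+1 <= u - 1 -> ~~ (u <= (p x).+1 <= v)).

Definition NCT n (p : {perm 'I_n}) : Prop :=
  exists u v, [/\ 1 <= u, u < v, v < n & NCT_uv u v p].

From Pilot Require Import Defs.
From mathcomp Require Import all_boot all_order all_fingroup.
From mathcomp Require Import zify.
(* ssrfun's [pcomp] shadows [Defs.pcomp] otherwise. *)
Import Defs.
Set Implicit Arguments. Unset Strict Implicit. Unset Printing Implicit Defensive.

(* Write x for the index of u, so that v = π(u) has index p x and u - 1 has
   index a = 1_n^-1 x.  Since π^-1 1_n maps a to p x, the transposition (a, p x)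
   splits a cycle of π^-1 1_n: #(π^-1 γ) = #(π^-1 1_n) + 1.  With #(π) = n/2 and
   #(γ) = 2, condition (ii) is then exactly the a_1 condition, given (iii).
   Conversely, a noncrossing pairing has #(π^-1 1_n) = n/2 + 1 (splitting off an
   innermost pair removes one cycle), so a pairing in a_1 has a crossing; take
   the crossing chord (x, p x) with the least x.  Minimality gives (iv), and the
   crossing chord (c, p c) joins the two cycles [x, p x] and its complement of
   γ, which gives (i). *)

Section PermCycles.
Variable T : finType.
Implicit Types (s t : {perm T}) (x y : T).

Lemma porbit_fix s x : s x = x -> porbit s x = [set x].
Proof.
move=> sx; apply/setP => y; rewrite inE; apply/porbitP/eqP => [[i ->]|->].
  by elim: i => [|i IH]; rewrite ?expg0 ?perm1 // expgSr permM IH sx.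
by exists 0; rewrite expg0 perm1.
Qed.

Lemma card_porbits1 : #|porbits (1 : {perm T})| = #|T|.
Proof.
apply: card_imset => x y; rewrite !porbit_fix ?perm1 //.
exact: set1_inj.
Qed.

Lemma porbits_mul_tperm_r s x y :
  #|porbits (s * tperm x y)| + (x \notin porbit s y).*2 = #|porbits s| + (x != y).
Proof.
rewrite -[porbits (s * _)]porbitsV invMg tpermV.
by have := porbits_mul_tperm s^-1 x y; rewrite /= porbitV porbitsV.
Qed.

Lemma invg_involutive s : involutive s -> s^-1%g = s.
Proof. by move=> sK; apply/permP => x; apply: (@perm_inj _ s); rewrite permKV sK. Qed.

End PermCycles.

Section LongCycle.
Variable n : nat.
Implicit Types (s : {perm 'I_n}) (x y z a b : 'I_n).

Lemma mem_porbit_succ s x (m : nat) :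
  (forall y, x <= y < m -> s y = y.+1 :> nat) ->
  forall z, x <= z <= m -> z \in porbit s x.
Proof.
move=> succ z /andP[xz zm]; have [k zE] : exists k, z = x + k :> nat by exists (z - x); lia.
elim: k z zE zm {xz} => [|k IH] z zE zm.
  by rewrite (_ : z = x) ?porbit_id //; apply: val_inj => /=; lia.
have y_lt : x + k < n by have := ltn_ord z; lia.
have <- : s (Ordinal y_lt) = z by apply: val_inj; rewrite /= succ /=; lia.
have := IH (Ordinal y_lt) erefl ltac:(rewrite /=; lia).
by rewrite -eq_porbit_mem => /eqP <-; rewrite -{1}[s]expg1 mem_porbit.
Qed.

Lemma one_nE x : one_n n x = (if x.+1 == n then 0 else x.+1) :> nat.
Proof.
rewrite /one_n permE /=; case: eqP => [->|]; first by rewrite modnn.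
by move=> ne; rewrite modn_small //; have := ltn_ord x; lia.
Qed.

Lemma one_nVE x : ((one_n n)^-1)%g x = (if x == 0 :> nat then n.-1 else x.-1) :> nat.
Proof.
rewrite -[in RHS](permKV (one_n n) x) one_nE.
move: (ltn_ord (((one_n n)^-1)%g x)); move: (nat_of_ord _) => k.
by case: (k.+1 =P n) => /=; lia.
Qed.

Lemma mem_porbit_one_n x y : y \in porbit (one_n n) x.
Proof.
have n_gt0 : 0 < n by have := ltn_ord x; lia.
have in_orbit0 z : z \in porbit (one_n n) (Ordinal n_gt0).
  apply: (mem_porbit_succ (m := n.-1)) => [w /andP[_ wn]|] /=; last by have := ltn_ord z; lia.
  by rewrite one_nE; case: eqP; lia.
suff /eqP -> : porbit (one_n n) x == porbit (one_n n) (Ordinal n_gt0) by [].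
by rewrite eq_porbit_mem.
Qed.

Lemma card_porbits_one_n : 0 < n -> #|porbits (one_n n)| = 1.
Proof.
move=> n_gt0; pose x0 : 'I_n := Ordinal n_gt0.
suff -> : porbits (one_n n) = [set porbit (one_n n) x0] by rewrite cards1.
apply/setP => A; rewrite inE; apply/imsetP/eqP => [[x _ ->]|->]; last by exists x0.
by apply/eqP; rewrite eq_porbit_mem mem_porbit_one_n.
Qed.

Lemma ncycles_one_n_tperm a b : a != b -> ncycles (pcomp (one_n n) (tperm a b)) = 2.
Proof.
move=> ab; have := porbits_mul_tperm (one_n n) a b.
rewrite /= ab mem_porbit_one_n card_porbits_one_n; first by rewrite addn0.
by have := ltn_ord a; lia.
Qed.

End LongCycle.

Section Involution.
Variable n : nat.
Implicit Types (q : {perm 'I_n}) (a c x z : 'I_n).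

Definition moved q : {set 'I_n} := [set x | q x != x].

Definition unpair q a : {perm 'I_n} := (q * tperm a (q a))%g.

Lemma moved_eq0 q : moved q = set0 -> q = 1%g.
Proof.
move=> m0; apply/permP => x; rewrite perm1.
by apply/eqP; have := in_set0 x; rewrite -m0 inE => /negbFE.
Qed.

Section Unpair.
Variable q : {perm 'I_n}.
Hypothesis qK : involutive q.

Lemma unpairE a x : unpair q a x = if (x == a) || (x == q a) then x else q x.
Proof.
rewrite permM; case: (eqVneq x a) => [->|xa]; first by rewrite tpermR.
case: (eqVneq x (q a)) => [->|xqa]; first by rewrite qK tpermL.
rewrite tpermD // eq_sym; first by apply: contra xqa => /eqP <-; rewrite qK.
by rewrite (inj_eq (@perm_inj _ q)).
Qed.

Lemma unpairK a : (unpair q a * tperm a (q a))%g = q.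
Proof. by rewrite /unpair -mulgA tperm2 mulg1. Qed.

Lemma unpair_involutive a : involutive (unpair q a).
Proof.
move=> x; rewrite [unpair q a x]unpairE.
case: ifP => [/orP[/eqP-> | /eqP->]|]; rewrite unpairE ?eqxx ?orbT //.
move=> /norP[xa xqa]; rewrite qK (inj_eq (@perm_inj _ q)) (negbTE xa) orbF.
by case: eqP => // qxa; case/eqP: xqa; rewrite -qxa qK.
Qed.

Lemma moved_unpair a : moved (unpair q a) = moved q :\ a :\ q a.
Proof.
apply/setP => x; rewrite !inE unpairE.
case: (eqVneq x a) => [->|_]; first by rewrite eqxx /= andbF.
by case: (eqVneq x (q a)) => [->|_]; rewrite ?eqxx.
Qed.

Lemma card_moved_unpair a : a \in moved q -> #|moved q| = (#|moved (unpair q a)|).+2.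
Proof.
move=> am; rewrite moved_unpair (cardsD1 a) am (cardsD1 (q a) (moved q :\ a)).
by move: am; rewrite !inE qK eq_sym => ->.
Qed.

End Unpair.

Lemma porbits_involution q : involutive q -> #|porbits q| * 2 + #|moved q| = n * 2.
Proof.
have [k] := ubnP #|moved q|; elim: k q => // k IH q lt_k qK.
have [m0|[a am]] := set_0Vmem (moved q).
  by rewrite m0 (moved_eq0 m0) card_porbits1 card_ord cards0 addn0.
have qa_a : q a != a by move: am; rewrite inE.
have split_a : #|porbits q| + 2 = #|porbits (unpair q a)| + 1.
  have := porbits_mul_tperm_r (unpair q a) a (q a).
  rewrite unpairK // porbit_fix; last by rewrite unpairE // eqxx orbT.
  by rewrite inE eq_sym qa_a.
have card_a := card_moved_unpair qK am.
have := IH (unpair q a) ltac:(lia) (unpair_involutive qK a); lia.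
Qed.

Definition crossing q a c := [&& a < c, c < q a & q a < q c].

Definition noncrossing q := forall a c, ~~ crossing q a c.

Lemma noncrossing_unpair q a : involutive q -> noncrossing q -> noncrossing (unpair q a).
Proof.
move=> qK nc x c; apply: contra (nc x c); rewrite /crossing !unpairE //.
by case: ifP => _; case: ifP => _; lia.
Qed.

Lemma noncrossing_nested q a z : involutive q -> noncrossing q ->
  a < z < q a -> q z != z -> a < q z < q a.
Proof.
move=> qK nc az qz_z.
have qz_a : q z != a by apply: contraTneq az => <-; rewrite qK ltnn andbF.
have qz_qa : q z != q a by apply: contraTneq az => /perm_inj ->; rewrite ltnn.
have := nc a z; have := nc (q z) a; rewrite /crossing qK.
move: qz_a qz_qa; rewrite -!(inj_eq val_inj) /=; lia.
Qed.

Lemma noncrossing_adjacent_pair q : involutive q -> noncrossing q -> moved q != set0 ->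
  exists2 a : 'I_n, a < q a & forall z, a < z < q a -> q z = z.
Proof.
move=> qK nc /set0Pn[a0]; rewrite inE => qa0.
(* A shortest chord encloses no chord: an enclosed chord would be shorter. *)
have [a lt_a min_a] :
    exists2 a : 'I_n, a < q a & forall b : 'I_n, b < q b -> q a - a <= q b - b.
  pose a1 := if a0 < q a0 then a0 else q a0.
  have lt_a1 : a1 < q a1.
    rewrite /a1; case: ifP; rewrite ?qK // => /negbT; rewrite -leqNgt leq_eqVlt.
    by case/orP => // /eqP/val_inj e; rewrite e eqxx in qa0.
  by case: (arg_minnP (P := fun b : 'I_n => b < q b) (fun b => q b - b) lt_a1) => a; exists a.
exists a => // z az; apply/eqP/negPn/negP => qz_z.
have := noncrossing_nested qK nc az qz_z.
case: (ltngtP z (q z)) => [lt_z|lt_qz|/val_inj zE]; last by rewrite -zE eqxx in qz_z.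
  by have := min_a z lt_z; lia.
by have := min_a (q z); rewrite qK => /(_ lt_qz); lia.
Qed.

Lemma porbits_one_n_noncrossing q : 0 < n -> involutive q -> noncrossing q ->
  #|porbits (one_n n * q)| * 2 = #|moved q| + 2.
Proof.
move=> n_gt0; have [k] := ubnP #|moved q|; elim: k q => // k IH q lt_k qK nc.
have [m0|m_ne0] := eqVneq (moved q) set0.
  by rewrite m0 (moved_eq0 m0) mulg1 card_porbits_one_n // cards0.
have [a lt_a adj] := noncrossing_adjacent_pair qK nc m_ne0.
have a_qa : a != q a by apply: contraTneq lt_a => <-; rewrite ltnn.
have am : a \in moved q by rewrite inE eq_sym.
have walk : a \in porbit (one_n n * unpair q a) (q a).
  rewrite porbit_sym; apply: (mem_porbit_succ (m := q a)); last by rewrite leqnn andbT ltnW.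
  move=> w /andP[aw wqa]; rewrite permM unpairE //.
  have w1 : one_n n w = w.+1 :> nat by rewrite one_nE; case: eqP; have := ltn_ord (q a); lia.
  rewrite -w1; case: (eqVneq (one_n n w) (q a)) => [e|ne]; first by rewrite orbT e.
  rewrite adj ?if_same //; move: ne; rewrite -(inj_eq val_inj) /= w1; lia.
have split_a : #|porbits (one_n n * q)| = #|porbits (one_n n * unpair q a)| + 1.
  have := porbits_mul_tperm_r (one_n n * unpair q a) a (q a).
  by rewrite -mulgA unpairK // walk a_qa addn0.
have card_a := card_moved_unpair qK am.
have := IH (unpair q a) ltac:(lia) (unpair_involutive qK a) (noncrossing_unpair a qK nc); lia.
Qed.

End Involution.

Lemma mem_orbit_porbit (T : finType) (G : {group {perm T}}) (g : {perm T}) x y z :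
  g \in G -> y \in orbit 'P G x -> z \in porbit g y -> z \in orbit 'P G x.
Proof.
move=> gG yO /porbitP[i ->]; apply: orbit_trans yO.
by rewrite -[_ y]apermE mem_orbit ?groupX.
Qed.

Section TwoCycles.
Variables (n : nat) (x b : 'I_n).
Hypotheses (le_xb : x <= b) (lt_b : b.+1 < n).
Let a := ((one_n n)^-1)%g x.
Let g := pcomp (one_n n) (tperm a b).

Let aE : a = (if x == 0 :> nat then n.-1 else x.-1) :> nat.
Proof. exact: one_nVE. Qed.

Let g_succ (y : 'I_n) : y != a :> nat -> y != b :> nat -> y.+1 < n -> g y = y.+1 :> nat.
Proof.
move=> ya yb yn; rewrite permM tpermD; last 2 first.
- by apply: contra ya => /eqP <-.
- by apply: contra yb => /eqP <-.
by rewrite one_nE; case: eqP; lia.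
Qed.

Let porbit_g_walk (y : 'I_n) (m : nat) : ~~ (y <= a < m) -> ~~ (y <= b < m) -> m < n ->
  forall z : 'I_n, y <= z <= m -> z \in porbit g y.
Proof. by move=> ya yb mn; apply: mem_porbit_succ => w ywm; apply: g_succ; lia. Qed.

Lemma mem_porbit_one_n_tperm_in (z : 'I_n) : x <= z <= b -> z \in porbit g x.
Proof. by apply: porbit_g_walk; rewrite ?aE; [case: eqP; lia | lia | lia]. Qed.

Lemma mem_porbit_one_n_tperm_out (z : 'I_n) : ~~ (x <= z <= b) -> z \in porbit g a.
Proof.
have ga : g a = b.+1 :> nat by rewrite permM tpermL one_nE; case: eqP; lia.
have [lt_a lt_zn] := (ltn_ord a, ltn_ord z).
case/nandP; rewrite -ltnNge => lt_z.
  rewrite porbit_sym; apply: (porbit_g_walk (m := a)); rewrite aE; case: eqP; lia.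
have ga_a : porbit g (g a) = porbit g a := porbit_perm g 1 a.
rewrite -ga_a; apply: (porbit_g_walk (m := z)); rewrite ?ga ?aE //.
- by case: eqP; lia.
- lia.
- lia.
Qed.

End TwoCycles.

Lemma transitive_crossing n (p : {perm 'I_n}) x c :
  crossing p x c ->
  [transitive <<[set p; pcomp (one_n n) (tperm ((one_n n)^-1%g x) (p x))]>>,
     on [set: 'I_n] | 'P].
Proof.
case/and3P => lt_xc lt_cb lt_bpc; have lt_pc := ltn_ord (p c).
set a := _ x; set g := pcomp _ _; set G := <<_>>%g.
have pG : p \in G by rewrite mem_gen // !inE eqxx.
have gG : g \in G by rewrite mem_gen // !inE eqxx orbT.
have le_xb : x <= p x by lia.
have lt_b : (p x).+1 < n by lia.
have cO : c \in orbit 'P G x.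
  by apply: mem_orbit_porbit gG (orbit_refl _ _ _) _; apply: mem_porbit_one_n_tperm_in; lia.
have aO : a \in orbit 'P G x.
  have pcO : p c \in orbit 'P G x by rewrite -[p c]apermE orbit_actr.
  apply: mem_orbit_porbit gG pcO _; rewrite porbit_sym.
  by apply: mem_porbit_one_n_tperm_out; lia.
suff OT : orbit 'P G x = [set: 'I_n] by rewrite -OT atrans_orbit.
apply/setP => z; rewrite inE; case: (boolP (x <= z <= p x)) => zx.
  exact: mem_orbit_porbit gG (orbit_refl _ _ _) (mem_porbit_one_n_tperm_in le_xb lt_b zx).
exact: mem_orbit_porbit gG aO (mem_porbit_one_n_tperm_out le_xb lt_b zx).
Qed.

Section Pairing.
Variables (n : nat) (p : {perm 'I_n}).
Hypotheses (pK : involutive p) (pF : forall x, p x != x).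

Let moved_pairing : moved p = [set: 'I_n].
Proof. by apply/setP => x; rewrite !inE pF. Qed.

Lemma ncycles_pairing : ncycles p * 2 = n.
Proof.
by have := porbits_involution pK; rewrite moved_pairing cardsT card_ord /ncycles; lia.
Qed.

Lemma half_pairing : n./2 = ncycles p.
Proof. by rewrite -[in LHS]ncycles_pairing muln2 doubleK. Qed.

Lemma ncycles_noncrossing_pairing : 0 < n -> noncrossing p ->
  ncycles (pcomp p^-1%g (one_n n)) * 2 = n + 2.
Proof.
move=> n_gt0 nc; rewrite /ncycles /pcomp invg_involutive //.
by rewrite porbits_one_n_noncrossing // moved_pairing cardsT card_ord.
Qed.

Lemma ncycles_one_n_tperm_split (a x : 'I_n) : one_n n a = x -> a != p x ->
  ncycles (pcomp p^-1%g (pcomp (one_n n) (tperm a (p x)))) =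
  ncycles (pcomp p^-1%g (one_n n)) + 1.
Proof.
move=> ax ne; rewrite /ncycles /pcomp -mulgA.
have := porbits_mul_tperm (one_n n * p^-1)%g a (p x); rewrite /= ne.
suff -> : a \in porbit (one_n n * p^-1) (p x) by rewrite addn0.
rewrite porbit_sym; have := mem_porbit (one_n n * p^-1)%g 1 a.
by rewrite expg1 permM ax invg_involutive.
Qed.

Lemma euler_iff_a1 (a x : 'I_n) : one_n n a = x -> a != p x ->
  let g := pcomp (one_n n) (tperm a (p x)) in
  ncycles p + ncycles (pcomp p^-1%g g) + ncycles g = n + 2 <->
  ncycles (pcomp p^-1%g (one_n n)) + 1 = n./2.
Proof.
move=> ax ne g; rewrite ncycles_one_n_tperm_split // ncycles_one_n_tperm //.
by rewrite half_pairing; have := ncycles_pairing; split; lia.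
Qed.

Lemma a1_not_noncrossing : ncycles (pcomp p^-1%g (one_n n)) + 1 = n./2 -> ~ noncrossing p.
Proof.
move=> a1p nc; move: a1p; rewrite half_pairing => a1p.
have := ncycles_pairing; have := ncycles_noncrossing_pairing _ nc; lia.
Qed.

Lemma NCT_uv_first_crossing x c : crossing p x c ->
  (forall y d, crossing p y d -> x <= y) ->
  ncycles (pcomp p^-1%g (one_n n)) + 1 = n./2 -> NCT_uv x.+1 (p x).+1 p.
Proof.
move=> cr first a1p; have /and3P[lt_xc lt_cb lt_bpc] := cr; have lt_pc := ltn_ord (p c).
have ne : (one_n n)^-1%g x != p x.
  by rewrite -(inj_eq val_inj) /= one_nVE; case: (nat_of_ord x =P 0); lia.
split; first by [].
exists ((one_n n)^-1%g x), (p x); split; first by rewrite [LHS]one_nVE eqSS subSS subn1.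
split; first by [].
split; first exact: transitive_crossing cr.
split; first exact/(euler_iff_a1 (permKV _ _) ne).
split; first by move=> y /= yx; rewrite (_ : y = x) //; apply: val_inj.
move=> y lt_y; apply/negP => /andP[le_x le_b].
have py_x : p y != x :> nat.
  by apply: contraTneq lt_y => /val_inj/(congr1 p); rewrite pK => ->; lia.
have py_b : p y != p x :> nat.
  by apply: contraTneq lt_y => /val_inj/perm_inj ->; lia.
by have := first y x; rewrite /crossing; lia.
Qed.

Lemma a1_of_NCT_uv u v : 1 <= u -> u < v -> v < n -> NCT_uv u v p ->
  ncycles (pcomp p^-1%g (one_n n)) + 1 = n./2.
Proof.
move=> le1u lt_uv lt_vn [_ [a [b [aE [bE [_ [euler [pu _]]]]]]]].
have lt_u : u.-1 < n by lia.
have ax : one_n n a = Ordinal lt_u.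
  by apply: val_inj; rewrite [LHS]one_nE aE /=; case: (u =P 1) => [->|]; case: eqP; lia.
have bx : b = p (Ordinal lt_u) by apply: val_inj; rewrite bE (pu (Ordinal lt_u)).
have ne : a != p (Ordinal lt_u).
  by rewrite -bx -(inj_eq val_inj) /= aE bE; case: (u =P 1); lia.
by apply/(euler_iff_a1 ax ne); rewrite -bx.
Qed.

End Pairing.

Lemma exists_first_crossing n (p : {perm 'I_n}) : ~ noncrossing p ->
  exists x c, crossing p x c /\ forall y d, crossing p y d -> x <= y.
Proof.
move=> ncr; have [/existsP[x0 cr0]|/existsPn none] :=
  boolP [exists x, exists c, crossing p x c]; last first.
  by case: ncr => x c; apply/negP => cr; have /existsPn/(_ c) := none x; rewrite cr.
case: (arg_minnP (P := fun x => [exists c, crossing p x c]) val cr0).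
move=> x /existsP[c cr] first; exists x, c; split => // y d cr_yd.
by apply: first; apply/existsP; exists d.
Qed.

Theorem proposition6 (n : nat) : ~~ odd n ->
  forall p : {perm 'I_n}, a1 p <-> NCT p.
Proof.
(* A pairing of [n] already forces n to be even. *)
move=> _ p; split.
- case=> [[pK pF] a1p].
  have [x [c [cr first]]] := exists_first_crossing (a1_not_noncrossing pK pF a1p).
  have /and3P[? ? ?] := cr; have := ltn_ord (p c).
  exists x.+1, (p x).+1; split; try lia.
  exact: NCT_uv_first_crossing cr first a1p.
- case=> u [v [le1u lt_uv lt_vn NCTp]]; have [[pK pF] _] := NCTp.
  by split; [split | exact: a1_of_NCT_uv NCTp].
Qed.
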